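(* Let $(H,L_H)$ be a right-resolving labeled graph presenting a sofic shift $Y$. Then $(H,L_H)$ is regular if and only if the set $\mathcal R(L_H)$ of regular rays is dense in $X_H$.
   Context: A labeled graph $(H,L_H)$: finite directed graph (vertices $V_H$, edges $E_H$, source/terminal maps $s_H,t_H$) without sinks or sources, labeling $L_H:E_H\to A$, edge shift $X_H$; $L_H$ acts coordinatewise; $Y=L_H(X_H)$. Right-resolving: distinct edges with the same source have distinct labels. $f_H(v)=\{L_H(x): x$ a right-infinite path starting at $v\}$; for $y\in Y$, $F(y)=\{w\in Y[0,\infty): y_{(-\infty,-1]}w\in Y\}$ with $Y[0,\infty)=\{y_{[0,\infty)}:y\in Y\}$. A vertex $v$ is regular if there is $z\in X_H$ whose edge $z_{-1}$ ends at $v$ with $f_H(v)=F(L_H(z))$; $(H,L_H)$ is regular if all vertices are regular. For $x\in X_H$, $\mathbb U(x)=\{z\in X_H:\exists N\ \forall i\le N,\ z_i=x_i\}$ (similarly in $Y$); $x$ is a regular ray if $L_H$ maps $\mathbb U(x)$ onto $\mathbb U(L_H(x))$; $\mathcal R(L_H)$ is the set of regular rays. *)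

From mathcomp Require Import all_boot.
From Stdlib Require Import ZArith.
Set Implicit Arguments. Unset Strict Implicit. Unset Printing Implicit Defensive.
Local Open Scope Z_scope.

Section LabeledGraph.
Variables (V E : finType) (s t : E -> V) (A : Type) (L : E -> A).

Definition no_sinks_sources : Prop :=
  forall v : V, (exists e, s e = v) /\ (exists e, t e = v).

Definition right_resolving : Prop :=
  forall e e' : E, s e = s e' -> L e = L e' -> e = e'.

Definition XH (x : Z -> E) : Prop := forall i : Z, t (x i) = s (x (i + 1)).

Definition Lmap (x : Z -> E) : Z -> A := fun i => L (x i).

Definition Yshift (y : Z -> A) : Prop :=
  exists x, XH x /\ forall i, y i = Lmap x i.

Definition Yright (w : nat -> A) : Prop :=
  exists y, Yshift y /\ forall n : nat, w n = y (Z.of_nat n).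

Definition fH (v : V) (w : nat -> A) : Prop :=
  exists p : nat -> E, s (p 0%nat) = v /\
    (forall n : nat, t (p n) = s (p n.+1)) /\
    forall n : nat, w n = L (p n).

Definition glue (y : Z -> A) (w : nat -> A) : Z -> A :=
  fun i => if i <? 0 then y i else w (Z.to_nat i).

Definition Ffol (y : Z -> A) (w : nat -> A) : Prop :=
  Yright w /\ Yshift (glue y w).

Definition regular_vertex (v : V) : Prop :=
  exists z, XH z /\ t (z (-1)) = v /\
    forall w, fH v w <-> Ffol (Lmap z) w.

Definition regular_graph : Prop := forall v : V, regular_vertex v.

Definition UX (x : Z -> E) (z : Z -> E) : Prop :=
  XH z /\ exists N : Z, forall i, i <= N -> z i = x i.

Definition UY (y : Z -> A) (y' : Z -> A) : Prop :=
  Yshift y' /\ exists N : Z, forall i, i <= N -> y' i = y i.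

Definition regular_ray (x : Z -> E) : Prop :=
  XH x /\ forall y', UY (Lmap x) y' -> exists z, UX x z /\ forall i, Lmap z i = y' i.

(* Density in X_H for the product topology (cylinder sets form a basis). *)
Definition dense_in_XH (S : (Z -> E) -> Prop) : Prop :=
  forall x, XH x -> forall n : nat, exists z, S z /\ XH z /\
    forall i : Z, - Z.of_nat n <= i <= Z.of_nat n -> z i = x i.

End LabeledGraph.

From mathcomp Require Import all_boot.
From Stdlib Require Import ZArith Lia Classical ClassicalEpsilon.

(* Call a path x regular up to N when every path carrying the labels of x up to time N
   has a lift agreeing with x up to N; equivalently, every such path sits at time N in a
   vertex whose follower set is contained in that of x_N.  By right-resolvingness this is
   monotone in N, the regular rays are the paths regular up to every N, and a vertex is
   regular exactly when it ends a path regular up to -1.  Density of regular rays therefore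
   yields regular vertices at once.  Conversely, if q is regular up to M, Koenig's lemma on
   the finite graph shows that a finite label window (m, M] of q already confines the
   follower set at time M; regrafting a regular-vertex witness at m and iterating produces
   paths that stabilise on ever longer right parts, and their limit is a regular ray
   through any prescribed central block. *)

Set Implicit Arguments.

Local Open Scope Z_scope.

Lemma dependent_choice (T : Type) (P : nat -> T -> Prop) (R : nat -> T -> T -> Prop)
    (x0 : T) :
  P 0%nat x0 -> (forall n x, P n x -> exists y, P n.+1 y /\ R n x y) ->
  exists f : nat -> T, f 0%nat = x0 /\ forall n, P n (f n) /\ R n (f n) (f n.+1).
Proof.
move=> P0 step.
pose next n x := epsilon (inhabits x0) (fun y => P n.+1 y /\ R n x y).
pose f := fix f n := if n is n'.+1 then next n' (f n') else x0.
have Pf n : P n (f n).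
  by elim: n => [|n IH] //=; case: (epsilon_spec (inhabits x0) _ (step n _ IH)).
exists f; split=> // n; split=> //.
by case: (epsilon_spec (inhabits x0) _ (step n _ (Pf n))).
Qed.

Lemma finite_uniform_bound (T : finType) (R : T -> Z -> Prop) :
  (forall a m m', m' <= m -> R a m -> R a m') -> (forall a, exists m, R a m) ->
  exists m, forall a, R a m.
Proof.
move=> R_down R_ex.
suff [m Rm] : exists m, forall a, a \in enum T -> R a m.
  by exists m => a; apply: Rm; rewrite mem_enum.
elim: (enum T) => [|a l [m Rm]]; first by exists 0.
have [ma Ra] := R_ex a.
exists (Z.min m ma) => b; rewrite in_cons => /orP[/eqP -> | bl].
- by apply: R_down Ra; lia.
- by apply: (R_down b m); [lia | exact: Rm].
Qed.

Lemma infinite_pigeonhole (T : finType) (R : T -> Z -> Prop) :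
  (forall a m m', m <= m' -> R a m -> R a m') -> (forall m, exists a, R a m) ->
  exists a, forall m, R a m.
Proof.
move=> R_up R_ex; apply: NNPP => no_a.
have [m nRm] : exists m, forall a, ~ R a m.
  apply: finite_uniform_bound => [a m m' le_m'm nRa Ra | a].
    exact/nRa/(R_up a m' m).
  by apply: not_all_ex_not => Ra; apply: no_a; exists a.
by have [a] := R_ex m; apply: nRm.
Qed.

Lemma decreasing_chain_le {M : nat -> Z} : (forall k, M k.+1 < M k) ->
  forall k d, M (k + d)%nat <= M k - Z.of_nat d.
Proof.
move=> decrM k; elim=> [|d IH]; first by rewrite addn0; lia.
by rewrite addnS; have := decrM (k + d)%nat; lia.
Qed.

Lemma chain_limit {T : Type} {q : nat -> Z -> T} {M : nat -> Z} :
  (forall k, M k.+1 < M k) -> (forall k i, M k.+1 < i -> q k.+1 i = q k i) ->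
  exists Q : Z -> T, forall k i, M k < i -> Q i = q k i.
Proof.
move=> decrM stable.
have stable_from k d i : M k < i -> q (k + d)%nat i = q k i.
  move=> lt_ki; elim: d => [|d IH]; first by rewrite addn0.
  rewrite addnS stable //; have := decreasing_chain_le decrM k d.+1.
  by rewrite addnS; lia.
exists (fun i => q (Z.to_nat (M 0%nat - i)).+1 i) => k i lt_ki.
have lt_Ki : M (Z.to_nat (M 0%nat - i)).+1 < i.
  by have := decreasing_chain_le decrM 0 (Z.to_nat (M 0%nat - i)).+1; rewrite add0n; lia.
have [le_kK | lt_Kk] := leqP k (Z.to_nat (M 0%nat - i)).+1.
- by rewrite -(subnKC le_kK) stable_from.
- by rewrite -(subnKC (ltnW lt_Kk)) stable_from.
Qed.

Section RegularRays.
Variables (V E : finType) (s t : E -> V) (A : Type) (L : E -> A).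
Hypothesis hss : no_sinks_sources s t.
Hypothesis hrr : right_resolving s L.

Definition right_path (p : nat -> E) : Prop := forall n, t (p n) = s (p n.+1).
Definition left_path (p : nat -> E) : Prop := forall n, t (p n.+1) = s (p n).

Definition splice (a b : Z -> E) (m : Z) : Z -> E :=
  fun i => if i <=? m then a i else b i.

(* [ray_before p m] puts [p n] at time [m - n]; [ray_after p m] and [tail x m] identify
   [p n] with time [m + 1 + n]. *)
Definition ray_before (p : nat -> E) (m : Z) : Z -> E := fun i => p (Z.to_nat (m - i)).
Definition ray_after (p : nat -> E) (m : Z) : Z -> E := fun i => p (Z.to_nat (i - m - 1)).
Definition tail (x : Z -> E) (m : Z) : nat -> E := fun n => x (m + 1 + Z.of_nat n).

Lemma splice_le a b m i : i <= m -> splice a b m i = a i.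
Proof. by rewrite /splice => /Z.leb_le ->. Qed.

Lemma splice_gt a b m i : m < i -> splice a b m i = b i.
Proof. by rewrite /splice => /Z.leb_gt ->. Qed.

Lemma XH_splice a b m :
  (forall i, i < m -> t (a i) = s (a (i + 1))) -> t (a m) = s (b (m + 1)) ->
  (forall i, m < i -> t (b i) = s (b (i + 1))) -> XH s t (splice a b m).
Proof.
move=> Ha Hm Hb i.
have [lt_im | [-> | lt_mi]] : i < m \/ i = m \/ m < i by lia.
- by rewrite !splice_le; [exact: Ha | lia | lia].
- by rewrite splice_le ?splice_gt //; lia.
- by rewrite !splice_gt; [exact: Hb | lia | lia].
Qed.

Lemma XH_shift x c : XH s t x -> XH s t (fun i => x (i + c)).
Proof. by move=> Hx i; rewrite Hx; congr (s (x _)); lia. Qed.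

Lemma ray_after_succ p m (n : nat) : ray_after p m (m + 1 + Z.of_nat n) = p n.
Proof. by rewrite /ray_after; congr p; lia. Qed.

Lemma ray_after_tail x m i : m < i -> ray_after (tail x m) m i = x i.
Proof. by move=> lt_mi; rewrite /ray_after /tail; congr x; lia. Qed.

Lemma XH_splice_right a p m :
  XH s t a -> t (a m) = s (p 0%nat) -> right_path p -> XH s t (splice a (ray_after p m) m).
Proof.
move=> Ha am Hp; apply: XH_splice => [i _ | | i lt_mi]; first exact: Ha.
  by have := ray_after_succ p m 0; rewrite Z.add_0_r => ->.
by rewrite /ray_after Hp; congr (s (p _)); lia.
Qed.

Lemma XH_splice_rays p q m : left_path p -> right_path q -> t (p 0%nat) = s (q 0%nat) ->
  XH s t (splice (ray_before p m) (ray_after q m) m).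
Proof.
move=> Hp Hq pq; apply: XH_splice => [i lt_im | | i lt_mi].
- by rewrite /ray_before -Hp; congr (t (p _)); lia.
- by rewrite /ray_before /ray_after Z.sub_diag; have -> : m + 1 - m - 1 = 0 by lia.
- by rewrite /ray_after Hq; congr (s (q _)); lia.
Qed.

Lemma right_path_tail x m : XH s t x -> right_path (tail x m).
Proof. by move=> Hx n; rewrite /tail Hx; congr (s (x _)); lia. Qed.

Lemma right_ray_from u : exists p, s (p 0%nat) = u /\ right_path p.
Proof.
have [e se] := (hss u).1.
have [|p [p0 Hp]] := @dependent_choice E (fun _ _ => True) (fun _ e e' => t e = s e') e I.
  by move=> n e' _; have [e'' ?] := (hss (t e')).1; exists e''.
by exists p; rewrite p0; split=> // n; case: (Hp n).
Qed.

Lemma left_ray_to v : exists p, t (p 0%nat) = v /\ left_path p.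
Proof.
have [e te] := (hss v).2.
have [|p [p0 Hp]] := @dependent_choice E (fun _ _ => True) (fun _ e e' => t e' = s e) e I.
  by move=> n e' _; have [e'' ?] := (hss (s e')).2; exists e''.
by exists p; rewrite p0; split=> // n; case: (Hp n).
Qed.

Lemma XH_through v : exists x, XH s t x /\ s (x 0) = v.
Proof.
have [p [pv Hp]] := left_ray_to v; have [q [qv Hq]] := right_ray_from v.
exists (splice (ray_before p (-1)) (ray_after q (-1)) (-1)).
split; first by apply: XH_splice_rays => //; rewrite pv qv.
by rewrite splice_gt.
Qed.

Lemma eq_fH {u w w'} : (forall n, w n = w' n) -> fH s t L u w -> fH s t L u w'.
Proof. by move=> eq_w [p [pu [Hp Hw]]]; exists p; split=> //; split=> // n; rewrite -eq_w. Qed.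

Lemma fH_tail x m : XH s t x -> fH s t L (t (x m)) (fun n => L (tail x m n)).
Proof.
move=> Hx; exists (tail x m); split; last by split=> //; apply: right_path_tail.
by rewrite /tail Hx Z.add_0_r.
Qed.

Lemma right_resolving_agree a b M N : XH s t a -> XH s t b ->
  (forall i, i <= M -> a i = b i) -> (forall i, i <= N -> L (a i) = L (b i)) ->
  forall i, i <= N -> a i = b i.
Proof.
move=> Ha Hb eqM eqL.
suff agree k : forall i, i <= M + Z.of_nat k -> i <= N -> a i = b i.
  by move=> i le_iN; apply: (agree (Z.to_nat (i - M))); lia.
elim: k => [|k IH] i le_ik le_iN; first by apply: eqM; lia.
apply: hrr; last exact: eqL.
have -> : i = i - 1 + 1 by lia.
by rewrite -Ha -Hb IH //; lia.
Qed.

Definition regular_upto (x : Z -> E) (N : Z) : Prop :=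
  forall z, XH s t z -> (forall i, i <= N -> L (z i) = L (x i)) ->
  exists p, XH s t p /\ (forall i, i <= N -> p i = x i) /\ forall i, L (p i) = L (z i).

Lemma regular_upto_le x N N' : XH s t x -> N <= N' -> regular_upto x N -> regular_upto x N'.
Proof.
move=> Hx le_NN' Rx z Hz eqL.
have [|p [Hp [eq_px eqLp]]] := Rx z Hz; first by move=> i le_iN; apply: eqL; lia.
exists p; split=> //; split=> //.
by apply: (right_resolving_agree Hp Hx eq_px) => i le_iN'; rewrite eqLp eqL.
Qed.

Lemma eq_regular_upto x x' N :
  (forall i, i <= N -> x i = x' i) -> regular_upto x N -> regular_upto x' N.
Proof.
move=> eq_x Rx z Hz eqL.
have [|p [Hp [eq_px eqLp]]] := Rx z Hz; first by move=> i le_iN; rewrite eq_x ?eqL.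
by exists p; split=> //; split=> // i le_iN; rewrite eq_px ?eq_x.
Qed.

Lemma regular_upto_shift x c N :
  regular_upto x (N + c) -> regular_upto (fun i => x (i + c)) N.
Proof.
move=> Rx z Hz eqL.
have [|p [Hp [eq_px eqLp]]] := Rx (fun i => z (i - c)) (XH_shift (- c) Hz).
  by move=> i le_i; rewrite /= eqL; [congr (L (x _)) | ]; lia.
exists (fun i => p (i + c)); split; first exact: XH_shift.
split=> [i le_iN | i]; first by apply: eq_px; lia.
by rewrite eqLp; congr (L (z _)); lia.
Qed.

Definition fH_sub (u v : V) : Prop := forall w, fH s t L u w -> fH s t L v w.

Lemma regular_upto_fH x N : XH s t x ->
  regular_upto x N <->
  forall z, XH s t z -> (forall i, i <= N -> L (z i) = L (x i)) -> fH_sub (t (z N)) (t (x N)).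
Proof.
move=> Hx; split=> [Rx z Hz eqL w [p [pz [Hp Hw]]] | sub z Hz eqL].
  have Hz' := XH_splice_right N Hz (esym pz) Hp.
  have [|p' [Hp' [eq_p'x eqLp']]] := Rx _ Hz'.
    by move=> i le_iN; rewrite splice_le // eqL.
  rewrite -(eq_p'x N); last lia.
  apply: (eq_fH _ (fH_tail N Hp')) => n.
  by rewrite Hw /tail eqLp' splice_gt; [rewrite ray_after_succ | lia].
have [p [px [Hp Hw]]] := sub z Hz eqL _ (fH_tail N Hz).
exists (splice x (ray_after p N) N); split; first exact: XH_splice_right.
split=> [i le_iN | i]; first exact: splice_le.
have [le_iN | lt_Ni] : i <= N \/ N < i by lia.
  by rewrite splice_le // eqL.
rewrite splice_gt; last lia.
by rewrite -[in RHS](ray_after_tail z lt_Ni) /ray_after Hw.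
Qed.

Lemma glue_neg (y : Z -> A) w i : i < 0 -> glue y w i = y i.
Proof. by rewrite /glue => /Z.ltb_lt ->. Qed.

Lemma glue_nat (y : Z -> A) w (n : nat) : glue y w (Z.of_nat n) = w n.
Proof. by rewrite /glue (proj2 (Z.ltb_ge _ _)) ?Nat2Z.id //; lia. Qed.

Lemma Ffol_of_lift z x w : XH s t x -> (forall i, i <= -1 -> L (x i) = L (z i)) ->
  fH s t L (t (x (-1))) w -> Ffol s t L (Lmap L z) w.
Proof.
move=> Hx eqL [p [px [Hp Hw]]].
have Hy := XH_splice_right (-1) Hx (esym px) Hp.
have glueE i : glue (Lmap L z) w i = Lmap L (splice x (ray_after p (-1)) (-1)) i.
  have [lt_i0 | le_0i] : i < 0 \/ 0 <= i by lia.
    by rewrite glue_neg // /Lmap splice_le ?eqL //; lia.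
  rewrite -(Z2Nat.id i le_0i) glue_nat /Lmap splice_gt; last lia.
  by rewrite Hw /ray_after; congr (L (p _)); lia.
have Yglue : Yshift s t L (glue (Lmap L z) w) by exists (splice x (ray_after p (-1)) (-1)).
by split=> //; exists (glue (Lmap L z) w); split=> // n; rewrite glue_nat.
Qed.

Lemma regular_vertexP v :
  regular_vertex s t L v <-> exists z, XH s t z /\ t (z (-1)) = v /\ regular_upto z (-1).
Proof.
split=> [[z [Hz [zv Fz]]] | [z [Hz [zv Rz]]]].
  exists z; split=> //; split=> //.
  apply/(regular_upto_fH _ Hz) => x Hx eqL w Hw.
  by rewrite zv; apply/Fz; exact: Ffol_of_lift Hx eqL Hw.
exists z; split=> //; split=> // w; split=> [Hw | [_ [y [Hy eq_y]]]].
  by apply: Ffol_of_lift Hz _ _ => //; rewrite zv.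
have [|p [Hp [eq_pz eqLp]]] := Rz y Hy.
  by move=> i le_i; have := eq_y i; rewrite glue_neg /Lmap; [move=> -> | lia].
rewrite -zv -(eq_pz (-1)); last lia.
apply: (eq_fH _ (fH_tail (-1) Hp)) => n.
by rewrite -(glue_nat (Lmap L z)) eq_y /Lmap /tail eqLp; congr (L (y _)); lia.
Qed.

Lemma regular_rayP x : regular_ray s t L x <-> XH s t x /\ forall N, regular_upto x N.
Proof.
split=> [[Hx Rx] | [Hx Rx]]; split=> //.
  move=> N z Hz eqL.
  have [|z' [[Hz' [M eqM]] eqLz']] := Rx (Lmap L z).
    by split; [exists z | exists N => i /eqL].
  exists z'; split=> //; split=> //.
  by apply: (right_resolving_agree Hz' Hx eqM) => i le_iN; rewrite -eqL //; exact: eqLz'.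
move=> y [[z [Hz eq_y]] [N eqN]].
have [|p [Hp [eq_px eqLp]]] := Rx N z Hz.
  by move=> i le_iN; rewrite -[L (z i)]/(Lmap L z i) -eq_y eqN.
by exists p; split=> [|i]; [split=> //; exists N | rewrite /Lmap eqLp eq_y].
Qed.

Definition window_reachable (y : Z -> A) (j : Z) (u : V) : Prop :=
  forall m, m < j ->
  exists x, XH s t x /\ (forall i, m < i <= j -> L (x i) = y i) /\ t (x j) = u.

Lemma window_reachable_step y j u : window_reachable y j u ->
  exists e, t e = u /\ L e = y j /\ window_reachable y (j - 1) (s e).
Proof.
move=> Ru.
pose R e m := t e = u /\ L e = y j /\
  exists x, XH s t x /\ (forall i, m < i <= j - 1 -> L (x i) = y i) /\ t (x (j - 1)) = s e.
have [e Re] : exists e, forall m, R e m.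
  apply: infinite_pigeonhole => [e m m' le_mm' [te [Le [x [Hx [Lx tx]]]]] | m].
    by split=> //; split=> //; exists x; split=> //; split=> // i Hi; apply: Lx; lia.
  have [|x [Hx [Lx tx]]] := Ru (Z.min m (j - 1)); first lia.
  exists (x j); split=> //; split; first by apply: Lx; lia.
  exists x; split=> //; split; first by move=> i Hi; apply: Lx; lia.
  by rewrite Hx; congr (s (x _)); lia.
have [te [Le _]] := Re 0.
by exists e; split=> //; split=> // m _; case: (Re m) => _ [].
Qed.

(* Koenig's lemma: finiteness of the graph turns arbitrarily long windows into a left ray. *)
Lemma window_reachable_lift y N u : window_reachable y N u ->
  exists x, XH s t x /\ (forall i, i <= N -> L (x i) = y i) /\ t (x N) = u.
Proof.
move=> /window_reachable_step [e0 [te0 [Le0 Re0]]].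
pose P n e := L e = y (N - Z.of_nat n) /\ window_reachable y (N - Z.of_nat n - 1) (s e).
have [||p [p0 Hp]] := @dependent_choice E P (fun _ e e' => t e' = s e) e0.
- by rewrite /P Z.sub_0_r.
- move=> n e [_ /window_reachable_step [e' [te' [Le' Re']]]]; exists e'.
  by rewrite /P (_ : N - Z.of_nat n.+1 = N - Z.of_nat n - 1); last lia.
have [q [qu Hq]] := right_ray_from u.
exists (splice (ray_before p N) (ray_after q N) N); split; [|split].
- by apply: XH_splice_rays => [n | //|]; [case: (Hp n) | rewrite p0 te0].
- move=> i le_iN; rewrite splice_le // /ray_before; case: (Hp (Z.to_nat (N - i))) => [[-> _] _].
  by congr y; lia.
- by rewrite splice_le /ray_before ?Z.sub_diag ?p0 //; lia.
Qed.

Definition window_dominates (q : Z -> E) (m M : Z) : Prop :=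
  forall x, XH s t x -> (forall i, m < i <= M -> L (x i) = L (q i)) ->
  fH_sub (t (x M)) (t (q M)).

Lemma window_dominates_exists q M : XH s t q -> regular_upto q M ->
  exists m, m < M /\ window_dominates q m M.
Proof.
move=> Hq Rq.
pose R u m := fH_sub u (t (q M)) \/
  forall x, XH s t x -> (forall i, m < i <= M -> L (x i) = L (q i)) -> t (x M) <> u.
have [m Rm] : exists m, forall u, R u m.
  apply: finite_uniform_bound => [u m m' le_m'm | u].
    case=> [sub | unreach]; [by left | right=> x Hx Lx].
    by apply: unreach => // i Hi; apply: Lx; lia.
  have [sub | nsub] := classic (fH_sub u (t (q M))); first by exists 0; left.
  apply: NNPP => no_bound; apply: nsub.
  have /window_reachable_lift [x [Hx [Lx <-]]] : window_reachable (Lmap L q) M u.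
    move=> m lt_mM; apply: NNPP => unreach; apply: no_bound.
    by exists m; right=> x Hx Lx xu; apply: unreach; exists x.
  exact: (proj1 (regular_upto_fH _ Hq) Rq x Hx Lx).
exists (Z.min m (M - 1)); split=> [|x Hx Lx]; first lia.
have [// | unreach] := Rm (t (x M)).
by case: (unreach x Hx) => // i Hi; apply: Lx; lia.
Qed.

Lemma regular_ray_of_chain (q : nat -> Z -> E) (M : nat -> Z) :
  (forall k, XH s t (q k)) -> (forall k, M k.+1 < M k) ->
  (forall k i, M k.+1 < i -> q k.+1 i = q k i) ->
  (forall k, window_dominates (q k) (M k.+1) (M k)) ->
  exists Q, regular_ray s t L Q /\ forall i, M 0%nat < i -> Q i = q 0%nat i.
Proof.
move=> Hq decrM stable dom.
have [Q eqQ] := chain_limit decrM stable.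
have below N : M (Z.to_nat (M 0%nat - N)).+1 < N.
  by have := decreasing_chain_le decrM 0 (Z.to_nat (M 0%nat - N)).+1; rewrite add0n; lia.
have eqQ' k i : M k.+1 < i -> Q i = q k i by move=> lt_i; rewrite (eqQ k.+1) // stable.
have HQ : XH s t Q.
  move=> i; have lt_i := below i.
  by rewrite !(eqQ (Z.to_nat (M 0%nat - i)).+1) ?Hq //; lia.
have RQ k : regular_upto Q (M k).
  apply/(regular_upto_fH _ HQ) => z Hz Lz.
  rewrite (eqQ' k) //; apply: dom => // i Hi.
  by rewrite Lz ?(eqQ' k) //; lia.
exists Q; split=> [|i /eqQ //].
apply/regular_rayP; split=> // N.
apply: (regular_upto_le HQ _ (RQ (Z.to_nat (M 0%nat - N)).+1)).
by have := below N; lia.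
Qed.

Lemma regular_graft q m : regular_graph s t L -> XH s t q ->
  exists q', XH s t q' /\ regular_upto q' m /\ forall i, m < i -> q' i = q i.
Proof.
move=> reg Hq.
have [z [Hz [zq Rz]]] := (regular_vertexP (t (q m))).1 (reg _).
pose a i := z (i + (-1 - m)).
exists (splice a q m); split; [|split].
- apply: XH_splice => [i _ | | i _]; [exact: XH_shift | | exact: Hq].
  by rewrite /a (_ : m + (-1 - m) = -1) ?zq //; lia.
- apply: (@eq_regular_upto a) => [i le_im | ]; first by rewrite splice_le.
  by apply: regular_upto_shift; rewrite (_ : m + (-1 - m) = -1) //; lia.
- by move=> i lt_mi; rewrite splice_gt.
Qed.

Lemma regular_graph_dense_rays :
  regular_graph s t L -> dense_in_XH s t (regular_ray s t L).
Proof.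
move=> reg x Hx n.
pose m := - Z.of_nat n - 1.
have [q0 [Hq0 [Rq0 eq_q0x]]] := regular_graft m reg Hx.
pose P (_ : nat) (qM : (Z -> E) * Z) := XH s t qM.1 /\ regular_upto qM.1 qM.2.
pose R (_ : nat) (qM qM' : (Z -> E) * Z) := qM'.2 < qM.2 /\
  (forall i, qM'.2 < i -> qM'.1 i = qM.1 i) /\ window_dominates qM.1 qM'.2 qM.2.
have [||f [f0 Hf]] := @dependent_choice _ P R (q0, m); first by [].
  move=> k [q M] [Hq Rq].
  have [m' [lt_m'M dom]] := window_dominates_exists Hq Rq.
  have [q' [Hq' [Rq' eq_q'q]]] := regular_graft m' reg Hq.
  by exists (q', m').
have [||||Q [RQ eq_Qq0]] := @regular_ray_of_chain (fun k => (f k).1) (fun k => (f k).2).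
- by move=> k; case: (Hf k) => [[]].
- by move=> k; case: (Hf k) => _ [].
- by move=> k; case: (Hf k) => _ [_ []].
- by move=> k; case: (Hf k) => _ [_ []].
exists Q; split=> //; split; first by case/regular_rayP: RQ.
by move=> i Hi; rewrite eq_Qq0 f0 /= ?eq_q0x //; rewrite /m; lia.
Qed.

Lemma dense_rays_regular_graph :
  dense_in_XH s t (regular_ray s t L) -> regular_graph s t L.
Proof.
move=> dense v.
have [x [Hx xv]] := XH_through v.
have [z [/regular_rayP [Hz Rz] [_ eq_zx]]] := dense x Hx 0%nat.
apply/regular_vertexP; exists z; split=> //; split; last exact: Rz.
by rewrite Hz eq_zx.
Qed.

End RegularRays.

Theorem lemma3p11 (V E : finType) (s t : E -> V) (A : Type) (L : E -> A)
  (hss : no_sinks_sources s t) (hrr : right_resolving s L) :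
  regular_graph s t L <-> dense_in_XH s t (regular_ray s t L).
Proof.
split; [exact: regular_graph_dense_rays hss hrr | exact: dense_rays_regular_graph hss hrr].
Qed.
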